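(* Let $W$ be a finite set of possible worlds and let $\bullet$ be an operator assigning to every pair $(G_1,G_2)$ of belief algebras on $W$ a belief algebra $G_1\bullet G_2$, satisfying the postulates (RA1)–(RA4) described in the context. Let $G_1=(2^W,\gg_1)$ and $G_2=(2^W,\gg_2)$ be complete belief algebras, and let $$\Lambda(G_1,G_2)=\{(\{\omega\},\{\omega'\})\mid \{\omega\}\gg_1\{\omega'\},\ I_2(\{\omega\})=I_2(\{\omega'\})\},$$ where $I_2$ denotes the support with respect to the backbone of $G_2$. Then $G_1\bullet G_2=\operatorname{Gen}(\Lambda(G_1,G_2)\cup G_2)$, and the result of revising $G_1$ by $G_2$ is unique.
   Context: $W$ is a finite nonempty set. Let $R_W=\{(U,V)\mid U,V\subseteq W,\ U\cap V=\varnothing\}$. A belief algebra on $W$ is a pair $(2^W,\gg)$, where $\gg$ is a binary relation on $2^W$ satisfying, for all $U,V,U_1,V_1,U_2,V_2\subseteq W$: (A0) $\gg\subseteq R_W$; (A1) $U\gg\varnothing$ iff $U\neq\varnothing$; (A2) if $U\gg V$ then not $V\gg U$; (A3) if $U_1\supseteq U$, $U\gg V$, $V\supseteq V_1$ and $U_1\cap V_1=\varnothing$, then $U_1\gg V_1$; (A4) if $U=U_1\cup V_1=U_2\cup V_2$, $U_1\gg V_1$ and $U_2\gg V_2$, then $U_1\cap U_2\gg V_1\cup V_2$. A belief algebra is identified with its relation $\gg$ viewed as a set of pairs; $(U,V)\in G$ means $U\gg V$, and $\subseteq,\cup,\cap$ refer to these sets of pairs. For $\Omega\subseteq R_W$,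 $\operatorname{Gen}(\Omega)$ is the smallest subset of $R_W$ containing $\Omega$ and closed under: (i) it contains $(U,\varnothing)$ for every nonempty $U\subseteq W$; (ii) if $(U,V)$ is in it, $U\subseteq U_1$, $V_1\subseteq V$, $U_1\cap V_1=\varnothing$, then $(U_1,V_1)$ is in it; (iii) if $U_1\cup V_1=U_2\cup V_2$ and $(U_1,V_1),(U_2,V_2)$ are in it, then $(U_1\cap U_2,V_1\cup V_2)$ is in it. For a total preorder $\preceq$ on $W$ (with $\omega\prec\omega'$ iff $\omega\preceq\omega'$ and not $\omega'\preceq\omega$), the relation $U\gg V$ iff $U\cap V=\varnothing$ and there is $\omega_1\in U$ with $\omega_1\prec\omega_2$ for all $\omega_2\in V$ is a belief algebra; those arising this way are complete belief algebras (CBAs). Every belief algebra $(2^W,\gg)$ has a unique backbone: a sequence $U_1,\dots,U_n$ of nonempty pairwise disjoint sets with union $W$, with $U_i\gg U_{i+1}$ for $i<n$, such that for each $i$ any two disjoint nonempty subsets of $U_i$ are incomparable under $\gg$. For nonempty $V\subseteq W$, its support $I(V)$ is $U_i$ for the least $i$ with $V\cap U_i\neq\varnothing$. Postulates (for all belief algebras $G_1=(2^W,\gg_1)$, $G_2=(2^W,\gg_2)$): (RA1) $G_2\subseteq G_1\bullet G_2$. (RA2) There is $\Omega\subseteq G_1\cup G_2$ with $G_1\bullet G_2=\operatorname{Gen}(\Omega)$. (RA3) If $G_1,G_2$ are CBAs, then $G_1\bullet G_2$ is a CBA. (RA4) If $G_1,G_2$ are CBAs and $I_2(\{\omega\})=I_2(\{\omega'\})$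 (support w.r.t. the backbone of $G_2$), then $(\{\omega\},\{\omega'\})\in G_1\bullet G_2$ iff $\{\omega\}\gg_1\{\omega'\}$. *)

From mathcomp Require Import all_boot.
From Stdlib Require Import ClassicalEpsilon.
Set Implicit Arguments. Unset Strict Implicit. Unset Printing Implicit Defensive.

Section BeliefAlgebra.
Variable W : finType.

(* A binary relation on 2^W, viewed as a set of pairs (U,V); (U,V) \in G means U >> V. *)
Definition brel := {set ({set W} * {set W})}.

Definition belief_algebra (G : brel) : Prop :=
  (forall U V : {set W}, (U, V) \in G -> [disjoint U & V]) /\
  (forall U : {set W}, (U, set0) \in G <-> U != set0) /\
  (forall U V : {set W}, (U, V) \in G -> (V, U) \notin G) /\
  (forall U V U1 V1 : {set W}, U \subset U1 -> (U, V) \in G ->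
               V1 \subset V -> [disjoint U1 & V1] -> (U1, V1) \in G) /\
  (forall U U1 V1 U2 V2 : {set W}, U = U1 :|: V1 -> U = U2 :|: V2 ->
               (U1, V1) \in G -> (U2, V2) \in G -> (U1 :&: U2, V1 :|: V2) \in G).

Definition gen_closed (S : brel) : bool :=
  [forall U : {set W}, (U != set0) ==> ((U, set0) \in S)] &&
  [forall p in S, forall U1 : {set W}, forall V1 : {set W},
     [&& p.1 \subset U1, V1 \subset p.2 & [disjoint U1 & V1]] ==> ((U1, V1) \in S)] &&
  [forall p in S, forall q in S,
     (p.1 :|: p.2 == q.1 :|: q.2) ==> ((p.1 :&: q.1, p.2 :|: q.2) \in S)].

Definition Gen (Om : brel) : brel :=
  [set p | [forall S : brel, (gen_closed S && (Om \subset S)) ==> (p \in S)]].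

Definition CBA (G : brel) : Prop :=
  exists le : rel W, total le /\ transitive le /\
    G = [set p : {set W} * {set W} | [disjoint p.1 & p.2] &&
           [exists w1 in p.1, forall w2 in p.2, le w1 w2 && ~~ le w2 w1]].

Definition is_backbone (G : brel) (bb : seq {set W}) : Prop :=
  (forall i, i < size bb -> nth set0 bb i != set0) /\
  (forall i j, i < j -> j < size bb -> [disjoint nth set0 bb i & nth set0 bb j]) /\
  (\bigcup_(U <- bb) U = [set: W]) /\
  (forall i, i.+1 < size bb -> (nth set0 bb i, nth set0 bb i.+1) \in G) /\
  (forall i, i < size bb -> forall X Y : {set W},
      X \subset nth set0 bb i -> Y \subset nth set0 bb i ->
      X != set0 -> Y != set0 -> [disjoint X & Y] -> (X, Y) \notin G).

(* The (unique, by the paper) backbone, chosen by classical choice. *)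
Definition backbone (G : brel) : seq {set W} :=
  epsilon (inhabits [::]) (is_backbone G).

Definition supp (G : brel) (V : {set W}) : {set W} :=
  let bb := backbone G in nth set0 bb (find (fun U => U :&: V != set0) bb).

Definition Lambda (G1 G2 : brel) : brel :=
  [set p | [exists w : W, exists w' : W,
     [&& p == ([set w], [set w']), ([set w], [set w']) \in G1 &
         supp G2 [set w] == supp G2 [set w']]]].

End BeliefAlgebra.

(* By RA3 the revision G1 • G2 is the CBA of a total preorder <=.  Every CBA
   is generated by rules (i)-(iii) from its singleton pairs {x} >> {y}, x < y:
   rule (iii) adds the worlds of V to ({x}, V) one at a time and rule (ii)
   enlarges {x} to U.  Compare such x, y in the preorder <=2 of G2.  If x <2 y
   the pair lies in G2; y <2 x is impossible because G2 is contained in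
   G1 • G2 by RA1; if x ~2 y then x and y lie in the same block of the
   backbone of G2, whose blocks are strictly ordered, so they have the same
   support and RA4 puts the pair in G1, hence in Lambda.  Conversely G1 • G2 is
   a belief algebra, hence closed under (i)-(iii), and contains G2 (RA1) and
   Lambda (RA4). *)

From mathcomp Require Import all_boot.
From Stdlib Require Import ClassicalEpsilon.
Set Implicit Arguments. Unset Strict Implicit. Unset Printing Implicit Defensive.

Lemma set1_neq0 (T : finType) (x : T) : [set x] != set0.
Proof. by apply/set0Pn; exists x; rewrite inE. Qed.

Section StrictPart.
Variables (W : finType) (le : rel W).
Hypotheses (le_total : total le) (le_trans : transitive le).

Definition strict : rel W := fun x y => le x y && ~~ le y x.

Lemma le_refl x : le x x.
Proof. by have := le_total x x; rewrite orbb. Qed.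

Lemma strict_irr x : strict x x = false.
Proof. by rewrite /strict andbN. Qed.

Lemma strictW x y : strict x y -> le x y.
Proof. by case/andP. Qed.

Lemma le_strict_trans x y z : le x y -> strict y z -> strict x z.
Proof.
move=> lxy /andP[lyz nlzy]; rewrite /strict (le_trans lxy lyz) /=.
by apply: contra nlzy => lzx; apply: le_trans lzx lxy.
Qed.

Lemma strict_trans : transitive strict.
Proof. by move=> y x z /strictW; apply: le_strict_trans. Qed.

Lemma strict_asym x y : strict x y -> strict y x = false.
Proof. by case/andP=> lxy _; rewrite /strict lxy andbF. Qed.

Lemma strict_total x y : [\/ strict x y, strict y x | le x y && le y x].
Proof.
rewrite /strict; case lxy: (le x y); case lyx: (le y x); try by constructor.
by have := le_total x y; rewrite lxy lyx.
Qed.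

Lemma exists_le_min (A : {set W}) : A != set0 ->
  exists2 m, m \in A & forall a, a \in A -> le m a.
Proof.
move=> /set0Pn[a0 a0A].
have := mem_sort le (enum A); have := sort_sorted le_total (enum A).
case: (sort le (enum A)) => [|m s] sorted_s mem_s.
  by have := mem_s a0; rewrite mem_enum a0A.
exists m; first by rewrite -mem_enum -mem_s mem_head.
have /allP m_min := order_path_min le_trans sorted_s.
move=> a; rewrite -mem_enum -mem_s inE => /predU1P[->|a_s]; first exact: le_refl.
exact: m_min.
Qed.

End StrictPart.

Section CompleteBeliefAlgebra.
Variables (W : finType) (le : rel W).
Hypotheses (le_total : total le) (le_trans : transitive le).

(* [CBA G] states exactly [G = cba_of le] for a total preorder [le]. *)
Definition cba_of : brel W :=
  [set p : {set W} * {set W} |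
    [disjoint p.1 & p.2] && [exists x in p.1, forall y in p.2, strict le x y]].

Lemma cbaP (U V : {set W}) :
  reflect ([disjoint U & V] /\ exists2 x, x \in U & forall y, y \in V -> strict le x y)
          ((U, V) \in cba_of).
Proof.
rewrite inE /=; apply: (iffP andP) => [[dUV /exists_inP[x xU /forall_inP xV]]|].
  by split=> //; exists x.
by case=> dUV [x xU xV]; split=> //; apply/exists_inP; exists x => //; apply/forall_inP.
Qed.

Lemma mem_cba1 x y : (([set x], [set y]) \in cba_of) = strict le x y.
Proof.
apply/cbaP/idP => [[_ [_ /set1P-> /(_ y (set11 y))]] //|xy].
split; first by rewrite disjoints1 in_set1; apply: contraTneq xy => ->; rewrite strict_irr.
by exists x; rewrite ?in_set1 // => _ /set1P->.
Qed.

Lemma cba_meet (U1 V1 U2 V2 : {set W}) x1 x2 :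
  U1 :|: V1 = U2 :|: V2 -> x1 \in U1 -> le x1 x2 ->
  (forall y, y \in V1 -> strict le x1 y) -> (forall y, y \in V2 -> strict le x2 y) ->
  exists2 x, x \in U1 :&: U2 & forall y, y \in V1 :|: V2 -> strict le x y.
Proof.
move=> U12 x1U1 x12 x1V1 x2V2; exists x1.
  have : x1 \in U2 :|: V2 by rewrite -U12 inE x1U1.
  case/setUP=> [x1U2|x1V2]; first by rewrite inE x1U1.
  by have := le_strict_trans le_trans x12 (x2V2 _ x1V2); rewrite strict_irr.
by move=> y /setUP[/x1V1 //|/x2V2]; apply: le_strict_trans.
Qed.

Lemma cba_belief_algebra : belief_algebra cba_of.
Proof.
split; [|split; [|split; [|split]]].
- by move=> U V /cbaP[].
- move=> U; split=> [/cbaP[_ [x xU _]]|/set0Pn[x xU]]; first by apply/set0Pn; exists x.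
  by apply/cbaP; split; [rewrite -setI_eq0 setI0 | exists x; rewrite // => y; rewrite inE].
- move=> U V /cbaP[_ [x xU xV]]; apply/cbaP=> -[_ [y yV yU]].
  by have := xV y yV; rewrite strict_asym ?yU.
- move=> U V U1 V1 sUU1 /cbaP[_ [x xU xV]] sV1V dU1V1; apply/cbaP; split=> //.
  by exists x; [apply: subsetP xU | move=> y /(subsetP sV1V); apply: xV].
- move=> U U1 V1 U2 V2 -> U12 /cbaP[d1 [x1 x1U1 x1V1]] /cbaP[d2 [x2 x2U2 x2V2]].
  apply/cbaP; split.
    rewrite -setI_eq0 setIUr setU_eq0 !setI_eq0.
    by rewrite (disjointWl (subsetIl _ _) d1) (disjointWl (subsetIr _ _) d2).
  have [x12|x21] := orP (le_total x1 x2); first exact: cba_meet x1V1 x2V2.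
  by rewrite setIC setUC; apply: cba_meet x2V2 x1V1.
Qed.

End CompleteBeliefAlgebra.

Section Generation.
Variable W : finType.
Implicit Types (S Om : brel W).

Lemma gen_closedP S :
  reflect [/\ forall U : {set W}, U != set0 -> (U, set0) \in S,
              forall U V U1 V1 : {set W}, (U, V) \in S -> U \subset U1 -> V1 \subset V ->
                [disjoint U1 & V1] -> (U1, V1) \in S &
              forall U1 V1 U2 V2 : {set W}, (U1, V1) \in S -> (U2, V2) \in S ->
                U1 :|: V1 = U2 :|: V2 -> (U1 :&: U2, V1 :|: V2) \in S]
          (gen_closed S).
Proof.
rewrite /gen_closed -andbA.
apply: (iffP and3P) => [[/forall_inP nonempty /forall_inP mono /forall_inP meet]|].
  split=> [U /nonempty //|U V U1 V1 /mono + sU sV dUV|U1 V1 U2 V2 /meet + p2 U12].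
    by move=> /forallP/(_ U1)/forallP/(_ V1)/implyP; apply; rewrite /= sU sV.
  by move=> /forall_inP/(_ _ p2)/implyP; apply; rewrite /= U12.
case=> nonempty mono meet; split; apply/forall_inP.
- exact: nonempty.
- move=> [U V] /= pS; apply/forallP=> U1; apply/forallP=> V1.
  by apply/implyP=> /and3P[]; apply: mono.
- move=> [U1 V1] /= p1; apply/forall_inP=> -[U2 V2] p2; apply/implyP=> /eqP.
  exact: meet.
Qed.

Lemma belief_algebra_gen_closed S : belief_algebra S -> gen_closed S.
Proof.
case=> _ [nonempty [_ [mono meet]]]; apply/gen_closedP; split.
- by move=> U /nonempty.
- by move=> U V U1 V1 pS sU sV; apply: mono sU pS sV.
- by move=> U1 V1 U2 V2 p1 p2 U12; apply: meet U12 p1 p2.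
Qed.

Lemma GenP Om p :
  reflect (forall S, gen_closed S -> Om \subset S -> p \in S) (p \in Gen Om).
Proof.
rewrite inE; apply: (iffP forallP) => [genp S cS OmS|genp S].
  by apply: implyP (genp S) _; rewrite cS OmS.
by apply/implyP=> /andP[]; apply: genp.
Qed.

Lemma Gen_min Om S : gen_closed S -> Om \subset S -> Gen Om \subset S.
Proof. by move=> cS OmS; apply/subsetP=> p /GenP; apply. Qed.

Lemma sub_Gen Om : Om \subset Gen Om.
Proof. by apply/subsetP=> p pOm; apply/GenP=> S _ /subsetP; apply. Qed.

Lemma Gen_closed Om : gen_closed (Gen Om).
Proof.
apply/gen_closedP; split.
- move=> U U0; apply/GenP=> S /gen_closedP[nonempty _ _] _; exact: nonempty.
- move=> U V U1 V1 /GenP pG sU sV dUV; apply/GenP=> S cS OmS.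
  case/gen_closedP: (cS) => _ mono _.
  exact: mono (pG S cS OmS) sU sV dUV.
- move=> U1 V1 U2 V2 /GenP p1 /GenP p2 U12; apply/GenP=> S cS OmS.
  case/gen_closedP: (cS) => _ _ meet.
  exact: meet (p1 S cS OmS) (p2 S cS OmS) U12.
Qed.

Section GenClosed.
Variable S : brel W.
Hypothesis S_closed : gen_closed S.

Lemma gen_closed_setUr (U V1 V2 : {set W}) : (U, V1) \in S -> (U, V2) \in S ->
  [disjoint U & V1 :|: V2] -> (U, V1 :|: V2) \in S.
Proof.
(* Meet (U :|: V2 :\: V1, V1) with (U :|: V1, V2 :\: V1); both cover U :|: V1 :|: V2. *)
case/gen_closedP: S_closed => _ mono meet p1 p2 dUV.
have dUV1 := disjointWr (subsetUl V1 V2) dUV.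
have dUV2 := disjointWr (subsetDl V2 V1) (disjointWr (subsetUr V1 V2) dUV).
have dV21 : [disjoint V2 :\: V1 & V1].
  by rewrite -setI_eq0 setDE -setIA (setIC _ V1) setICr setI0.
have q1 : (U :|: V2 :\: V1, V1) \in S.
  apply: mono p1 (subsetUl _ _) (subxx _) _.
  by rewrite -setI_eq0 setIUl setU_eq0 !setI_eq0 dUV1.
have q2 : (U :|: V1, V2 :\: V1) \in S.
  apply: mono p2 (subsetUl _ _) (subsetDl _ _) _.
  by rewrite -setI_eq0 setIUl setU_eq0 !setI_eq0 dUV2 disjoint_sym.
have sameU : (U :|: V2 :\: V1) :|: V1 = (U :|: V1) :|: V2 :\: V1.
  by apply/setP=> x; rewrite !inE; case: (x \in U); case: (x \in V1); rewrite ?orbF.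
have := meet _ _ _ _ q1 q2 sameU.
have -> : (U :|: V2 :\: V1) :&: (U :|: V1) = U.
  by apply/setP=> x; rewrite !inE; case: (x \in U); case: (x \in V1); rewrite ?andbF.
suff -> : V1 :|: V2 :\: V1 = V1 :|: V2 by [].
by apply/setP=> x; rewrite !inE; case: (x \in V1).
Qed.

Lemma gen_closed_set1r (U V : {set W}) : U != set0 -> [disjoint U & V] ->
  (forall v, v \in V -> (U, [set v]) \in S) -> (U, V) \in S.
Proof.
move=> U0 + UvS; have -> : V = \bigcup_(v in V) [set v].
  by apply/setP=> x; apply/idP/bigcupP=> [xV|[v vV /set1P->//]]; exists x; rewrite ?set11.
apply: (big_ind (fun X : {set W} => [disjoint U & X] -> (U, X) \in S)).
- by move=> _; case/gen_closedP: S_closed => nonempty _ _; apply: nonempty.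
- move=> X Y XS YS dUXY; apply: (gen_closed_setUr _ _ dUXY); [apply: XS | apply: YS].
    exact: disjointWr (subsetUl X Y) dUXY.
  exact: disjointWr (subsetUr X Y) dUXY.
- by move=> v /UvS.
Qed.

Lemma cba_sub_gen_closed (le : rel W) :
  (forall x y, strict le x y -> ([set x], [set y]) \in S) -> cba_of le \subset S.
Proof.
move=> pairS; apply/subsetP=> -[U V] /cbaP[dUV [x xU xV]].
case/gen_closedP: S_closed => _ mono _.
apply: (mono [set x] V U V _ _ (subxx V) dUV); last by rewrite sub1set.
apply: gen_closed_set1r; first exact: set1_neq0.
  by rewrite disjoints1 (disjointFr dUV xU).
by move=> y /xV; apply: pairS.
Qed.

End GenClosed.
End Generation.

Section Backbone.
Variables (W : finType) (le : rel W).
Hypotheses (le_total : total le) (le_trans : transitive le).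

(* [is_backbone G] is [is_backbone_on G [set: W]]; the relative version lets
   backbones be built by induction on the covered set. *)
Definition is_backbone_on (G : brel W) (A : {set W}) (bb : seq {set W}) : Prop :=
  (forall i, i < size bb -> nth set0 bb i != set0) /\
  (forall i j, i < j -> j < size bb -> [disjoint nth set0 bb i & nth set0 bb j]) /\
  (\bigcup_(U <- bb) U = A) /\
  (forall i, i.+1 < size bb -> (nth set0 bb i, nth set0 bb i.+1) \in G) /\
  (forall i, i < size bb -> forall X Y : {set W},
      X \subset nth set0 bb i -> Y \subset nth set0 bb i ->
      X != set0 -> Y != set0 -> [disjoint X & Y] -> (X, Y) \notin G).

Lemma backbone_on_cons (A M : {set W}) bb : is_backbone_on (cba_of le) A bb -> M != set0 ->
  {in M &, forall x y, le x y} -> {in M & A, forall x y, strict le x y} ->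
  is_backbone_on (cba_of le) (M :|: A) (M :: bb).
Proof.
move=> [ne [dj [cover [step incomp]]]] M0 M_flat M_below.
have bbA j : j < size bb -> nth set0 bb j \subset A.
  by move=> j_lt; rewrite -cover bigcup_seq; apply: bigcup_sup; apply: mem_nth.
have dMA : [disjoint M & A].
  rewrite disjoints_subset; apply/subsetP=> x xM; rewrite inE; apply/negP=> xA.
  by have := M_below x x xM xA; rewrite strict_irr.
split; [|split; [|split; [|split]]].
- by case=> [|i] /= i_lt; [exact: M0 | exact: ne].
- case=> [|i] [|j] //= ij j_lt; last exact: dj.
  exact: disjointWr (bbA j j_lt) dMA.
- by rewrite big_cons cover.
- case=> [|i] /= i_lt; last exact: step.
  apply/cbaP; split; first exact: disjointWr (bbA 0 i_lt) dMA.
  have /set0Pn[m mM] := M0.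
  by exists m => // y /(subsetP (bbA 0 i_lt)); apply: M_below.
- case=> [|i] /= i_lt X Y sXM sYM X0 Y0 dXY;
    last exact: incomp i_lt X Y sXM sYM X0 Y0 dXY.
  have /set0Pn[y yY] := Y0.
  apply/cbaP=> -[_ [x xX /(_ y yY)]].
  by rewrite /strict (M_flat y x (subsetP sYM y yY) (subsetP sXM x xX)) andbF.
Qed.

Lemma exists_backbone_on (A : {set W}) : exists bb, is_backbone_on (cba_of le) A bb.
Proof.
elim: {A}_.+1 {-2}A (ltnSn #|A|) => // n IH A; rewrite ltnS => A_le.
have [->|A0] := eqVneq A set0.
  by exists [::]; rewrite /is_backbone_on big_nil /=; repeat split.
(* The first block consists of the minima of A. *)
have [m mA m_min] := exists_le_min le_total le_trans A0.
set L := [set x | le x m].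
have [|bb bbP] := IH (A :\: L).
  apply: leq_trans A_le; apply: proper_card; apply/properP; split; first exact: subsetDl.
  by exists m; rewrite // !inE le_refl.
exists ((A :&: L) :: bb); rewrite -{1}(setID A L).
apply: backbone_on_cons bbP _ _ _.
- by apply/set0Pn; exists m; rewrite !inE mA le_refl.
- by move=> x y; rewrite !inE => /andP[_ xm] /andP[yA _]; apply: le_trans xm (m_min y yA).
- move=> x y; rewrite !inE => /andP[_ xm] /andP[nym yA].
  rewrite /strict (le_trans xm (m_min y yA)); apply: contra nym => yx.
  exact: le_trans yx xm.
Qed.

Lemma backbone_cba : is_backbone (cba_of le) (backbone (cba_of le)).
Proof.
apply: epsilon_spec; have [bb bbP] := exists_backbone_on [set: W].
by exists bb.
Qed.

Section BackboneOrder.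
Variable bb : seq {set W}.
Hypothesis bbP : is_backbone (cba_of le) bb.

Lemma backbone_flat i x y : i < size bb ->
  x \in nth set0 bb i -> y \in nth set0 bb i -> le x y.
Proof.
move=> i_lt xB yB; have [<-|xy] := eqVneq x y; first exact: le_refl.
case: bbP => _ [_ [_ [_ incomp]]].
have := incomp i i_lt [set y] [set x].
rewrite !sub1set mem_cba1 disjoints1 in_set1 (eq_sym y) xy.
move=> /(_ yB xB (set1_neq0 y) (set1_neq0 x) isT); rewrite negb_and negbK.
by case/orP=> // nyx; have := le_total x y; rewrite (negbTE nyx) orbF.
Qed.

Lemma backbone_step i x y : i.+1 < size bb ->
  x \in nth set0 bb i -> y \in nth set0 bb i.+1 -> strict le x y.
Proof.
move=> i_lt xB yB; case: bbP => _ [_ [_ [step _]]].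
case/cbaP: (step i i_lt) => _ [a aB /(_ y yB) ay].
apply: (le_strict_trans le_trans _ ay); exact: backbone_flat (ltnW i_lt) xB aB.
Qed.

Lemma backbone_lt i j x y : i < j -> j < size bb ->
  x \in nth set0 bb i -> y \in nth set0 bb j -> strict le x y.
Proof.
elim: j y => [|j IH] y ij j_lt xB yB //.
case: bbP => ne _.
rewrite ltnS leq_eqVlt in ij; case/orP: ij => [/eqP ij|ij].
  by rewrite ij in xB; apply: backbone_step j_lt xB yB.
have /set0Pn[z zB] := ne j (ltnW j_lt).
apply: (strict_trans le_trans (IH z ij (ltnW j_lt) xB zB)).
exact: backbone_step j_lt zB yB.
Qed.

Lemma backbone_find1 v : let k := find (fun U => U :&: [set v] != set0) bb in
  k < size bb /\ v \in nth set0 bb k.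
Proof.
case: bbP => _ [_ [cover _]].
have has_v : has (fun U => U :&: [set v] != set0) bb.
  have : v \in \bigcup_(U <- bb) U by rewrite cover inE.
  rewrite bigcup_seq => /bigcupP[U Ubb vU].
  by apply/hasP; exists U => //; apply/set0Pn; exists v; rewrite !inE vU eqxx.
split; first by rewrite -has_find.
by case/set0Pn: (nth_find set0 has_v) => y /setIP[yB /set1P yv]; subst y.
Qed.

End BackboneOrder.

Lemma supp_cba_eq w w' : le w w' -> le w' w ->
  supp (cba_of le) [set w] = supp (cba_of le) [set w'].
Proof.
move=> ww' w'w; rewrite /supp /=.
have bbP := backbone_cba; set bb := backbone _ in bbP *.
pose k v := find (fun U => U :&: [set v] != set0) bb.
have [k_lt wB] := backbone_find1 bbP w; have [k'_lt w'B] := backbone_find1 bbP w'.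
rewrite -/(k w) -/(k w') in k_lt k'_lt wB w'B *.
case: (ltngtP (k w) (k w')) => [kk'|k'k|-> //].
- by have := backbone_lt bbP kk' k'_lt wB w'B; rewrite /strict w'w andbF.
- by have := backbone_lt bbP k'k k_lt w'B wB; rewrite /strict ww' andbF.
Qed.

End Backbone.

Theorem theorem4 (W : finType) (HW : 0 < #|W|)
  (bullet : brel W -> brel W -> brel W)
  (Hba : forall G1 G2, belief_algebra G1 -> belief_algebra G2 ->
           belief_algebra (bullet G1 G2))
  (RA1 : forall G1 G2, belief_algebra G1 -> belief_algebra G2 ->
           G2 \subset bullet G1 G2)
  (RA2 : forall G1 G2, belief_algebra G1 -> belief_algebra G2 ->
           exists Om : brel W, Om \subset G1 :|: G2 /\ bullet G1 G2 = Gen Om)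
  (RA3 : forall G1 G2, CBA G1 -> CBA G2 -> CBA (bullet G1 G2))
  (RA4 : forall G1 G2, CBA G1 -> CBA G2 -> forall w w' : W,
           supp G2 [set w] = supp G2 [set w'] ->
           (([set w], [set w']) \in bullet G1 G2 <-> ([set w], [set w']) \in G1))
  (G1 G2 : brel W) (H1 : CBA G1) (H2 : CBA G2) :
  bullet G1 G2 = Gen (Lambda G1 G2 :|: G2).
Proof.
have [le [le_total [le_trans G12E]]] := RA3 _ _ H1 H2.
have [le1 [le1_total [le1_trans G1E]]] := H1.
have [le2 [le2_total [le2_trans G2E]]] := H2.
change (bullet G1 G2 = cba_of le) in G12E; change (G1 = cba_of le1) in G1E.
change (G2 = cba_of le2) in G2E.
have G2_sub : G2 \subset cba_of le.
  by rewrite -G12E; apply: RA1; [rewrite G1E | rewrite G2E]; apply: cba_belief_algebra.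
have RA4_12 := RA4 _ _ H1 H2; rewrite G12E in RA4_12.
rewrite G12E; apply/eqP; rewrite eqEsubset; apply/andP; split.
- apply: (cba_sub_gen_closed (Gen_closed _)) => x y xy.
  apply: (subsetP (sub_Gen _)); rewrite inE.
  case: (strict_total le2_total x y) => [xy2|yx2|/andP[xy2 yx2]].
  + by rewrite G2E mem_cba1 xy2 orbT.
  + have := subsetP G2_sub ([set y], [set x]).
    by rewrite G2E !mem_cba1 yx2 (strict_asym xy) => /(_ isT).
  have supp_xy : supp G2 [set x] = supp G2 [set y] by rewrite G2E; apply: supp_cba_eq.
  apply/orP; left; rewrite inE; apply/existsP; exists x; apply/existsP; exists y.
  by rewrite eqxx supp_xy eqxx andbT /=; apply/(RA4_12 x y supp_xy); rewrite mem_cba1.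
- apply: Gen_min; first exact/belief_algebra_gen_closed/cba_belief_algebra.
  apply/subsetP=> p; rewrite inE => /orP[|/(subsetP G2_sub) //].
  rewrite inE => /existsP[w /existsP[w' /and3P[/eqP-> wG1 /eqP supp_ww']]].
  exact/(RA4_12 w w' supp_ww').
Qed.
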